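(* Assume the standing assumptions and let $\rho,\kappa>0$. Then $\theta_{\rho,\kappa}$ has a unique minimizer $p_{DS}^*$ on $\mathbb{R}^m$, and if $p^*$ is any minimizer of $\theta$ on $\mathbb{R}^m$ (i.e. an optimal solution of $(D)$), then $$\|p_{DS}^*\|^2\le \|p^*\|^2+\frac{2\rho}{\kappa}D_f .$$ In particular, if $\|p^*\|\le R$ for some $R>0$, $D_f>0$, and $\rho=\frac{\epsilon}{3D_f}$, $\kappa=\frac{2\epsilon}{3R^2}$ for some $\epsilon>0$, then $\|p_{DS}^*\|\le\sqrt2\,R$.
   Context: Standing assumptions: $\mathcal{H}$ is a real Hilbert space; $f:\mathcal{H}\to\mathbb{R}\cup\{+\infty\}$ is proper, convex, lower semicontinuous with bounded effective domain; $g:\mathbb{R}^m\to\mathbb{R}\cup\{+\infty\}$ is proper, lower semicontinuous and $\mu$-strongly convex for some $\mu>0$; $A:\mathcal{H}\to\mathbb{R}^m$ is linear and continuous with $A(\operatorname{dom} f)\cap\operatorname{dom} g\neq\emptyset$. $D_f:=\sup\{\tfrac12\|x\|^2:x\in\operatorname{dom} f\}$. $\theta(p):=f^*(A^*p)+g^*(-p)$ (Fenchel conjugates, $A^*$ adjoint). For $\rho>0$, $f_\rho^*(q):=\sup_{x\in\mathcal{H}}\{\langle q,x\rangle-f(x)-\frac\rho2\|x\|^2\}$, $\theta_\rho(p):=f_\rho^*(A^*p)+g^*(-p)$ and $\theta_{\rho,\kappa}(p):=\theta_\rho(p)+\frac\kappa2\|p\|^2$. *)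

From Stdlib Require Import Reals Lra ClassicalEpsilon.
From Stdlib Require Vectors.Fin.
Open Scope R_scope.

Inductive ER : Type := Fin (x : R) | PInf | MInf.

Definition ER_le (a b : ER) : Prop :=
  match a, b with
  | MInf, _ => True
  | _, PInf => True
  | Fin x, Fin y => x <= y
  | _, _ => False
  end.

(* addition; +oo is absorbing (only sums of values > -oo occur below) *)
Definition ER_add (a b : ER) : ER :=
  match a, b with
  | PInf, _ => PInf
  | _, PInf => PInf
  | MInf, _ => MInf
  | _, MInf => MInf
  | Fin x, Fin y => Fin (x + y)
  end.

Definition ER_sup (S : R -> Prop) : ER :=
  match excluded_middle_informative (exists x, S x) with
  | left Hne =>
      match excluded_middle_informative (bound S) with
      | left Hb => Fin (proj1_sig (completeness S Hb Hne))
      | right _ => PInf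
      end
  | right _ => MInf
  end.

Record Hilbert : Type := {
  car :> Type;
  hzero : car;
  hadd : car -> car -> car;
  hopp : car -> car;
  hscal : R -> car -> car;
  hinner : car -> car -> R;
  hadd_assoc : forall x y z, hadd x (hadd y z) = hadd (hadd x y) z;
  hadd_comm : forall x y, hadd x y = hadd y x;
  hadd_0 : forall x, hadd x hzero = x;
  hadd_opp : forall x, hadd x (hopp x) = hzero;
  hscal_assoc : forall a b x, hscal a (hscal b x) = hscal (a * b) x;
  hscal_1 : forall x, hscal 1 x = x;
  hscal_distr_l : forall a x y, hscal a (hadd x y) = hadd (hscal a x) (hscal a y);
  hscal_distr_r : forall a b x, hscal (a + b) x = hadd (hscal a x) (hscal b x);
  hinner_sym : forall x y, hinner x y = hinner y x;
  hinner_add_l : forall x y z, hinner (hadd x y) z = hinner x z + hinner y z;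
  hinner_scal_l : forall a x y, hinner (hscal a x) y = a * hinner x y;
  hinner_pos : forall x, 0 <= hinner x x;
  hinner_def : forall x, hinner x x = 0 -> x = hzero;
  hcomplete : forall u : nat -> car,
    (forall eps, eps > 0 -> exists N, forall n k, (n >= N)%nat -> (k >= N)%nat ->
        sqrt (hinner (hadd (u n) (hopp (u k))) (hadd (u n) (hopp (u k)))) < eps) ->
    exists l, Un_cv (fun n => sqrt (hinner (hadd (u n) (hopp l)) (hadd (u n) (hopp l)))) 0
}.

Arguments hzero {h}. Arguments hadd {h}. Arguments hopp {h}.
Arguments hscal {h}. Arguments hinner {h}.

Definition hnorm {H : Hilbert} (x : H) : R := sqrt (hinner x x).
Definition hdist {H : Hilbert} (x y : H) : R := hnorm (hadd x (hopp y)).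

Definition Rm (m : nat) : Type := Fin.t m -> R.

Fixpoint fsum (m : nat) : (Fin.t m -> R) -> R :=
  match m with
  | O => fun _ => 0
  | S n => fun v => v Fin.F1 + fsum n (fun i => v (Fin.FS i))
  end.

Definition rm_add {m} (p q : Rm m) : Rm m := fun i => p i + q i.
Definition rm_opp {m} (p : Rm m) : Rm m := fun i => - p i.
Definition rm_scal {m} (a : R) (p : Rm m) : Rm m := fun i => a * p i.
Definition rm_inner {m} (p q : Rm m) : R := fsum m (fun i => p i * q i).
Definition rm_norm {m} (p : Rm m) : R := sqrt (rm_inner p p).
Definition rm_dist {m} (p q : Rm m) : R := rm_norm (rm_add p (rm_opp q)).

Definition in_dom {X : Type} (h : X -> ER) (x : X) : Prop := exists a, h x = Fin a.

Definition proper {X : Type} (h : X -> ER) : Prop :=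
  (forall x, h x <> MInf) /\ exists x, in_dom h x.

Definition lsc {X : Type} (d : X -> X -> R) (h : X -> ER) : Prop :=
  forall (c : R) (x : X) (u : nat -> X),
    (forall n, ER_le (h (u n)) (Fin c)) ->
    Un_cv (fun n => d (u n) x) 0 ->
    ER_le (h x) (Fin c).

Definition convex_H {H : Hilbert} (f : H -> ER) : Prop :=
  forall (x y : H) (a b t : R), f x = Fin a -> f y = Fin b -> 0 <= t <= 1 ->
    ER_le (f (hadd (hscal t x) (hscal (1 - t) y))) (Fin (t * a + (1 - t) * b)).

Definition strongly_convex_Rm {m} (mu : R) (g : Rm m -> ER) : Prop :=
  forall (x y : Rm m) (a b t : R), g x = Fin a -> g y = Fin b -> 0 <= t <= 1 ->
    ER_le (g (rm_add (rm_scal t x) (rm_scal (1 - t) y)))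
          (Fin (t * a + (1 - t) * b
                - mu / 2 * t * (1 - t) * (rm_norm (rm_add x (rm_opp y)))^2)).

Definition bounded_dom {H : Hilbert} (f : H -> ER) : Prop :=
  exists M, forall x, in_dom f x -> hnorm x <= M.

Definition linear_continuous {H : Hilbert} {m} (A : H -> Rm m) : Prop :=
  (forall x y, A (hadd x y) = rm_add (A x) (A y)) /\
  (forall a x, A (hscal a x) = rm_scal a (A x)) /\
  (exists C, forall x, rm_norm (A x) <= C * hnorm x).

Definition is_adjoint {H : Hilbert} {m} (A : H -> Rm m) (As : Rm m -> H) : Prop :=
  forall p x, hinner (As p) x = rm_inner p (A x).

(* D_f := sup { ||x||^2/2 : x in dom f }  (real; junk value 0 if not finite) *)
Definition Df {H : Hilbert} (f : H -> ER) : R :=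
  match ER_sup (fun v => exists x, in_dom f x /\ v = / 2 * (hnorm x)^2) with
  | Fin d => d
  | _ => 0
  end.

Definition conj_H {H : Hilbert} (f : H -> ER) (q : H) : ER :=
  ER_sup (fun v => exists x a, f x = Fin a /\ v = hinner q x - a).

Definition conj_rho_H {H : Hilbert} (rho : R) (f : H -> ER) (q : H) : ER :=
  ER_sup (fun v => exists x a, f x = Fin a /\ v = hinner q x - a - rho / 2 * (hnorm x)^2).

Definition conj_Rm {m} (g : Rm m -> ER) (p : Rm m) : ER :=
  ER_sup (fun v => exists y a, g y = Fin a /\ v = rm_inner p y - a).

Definition theta {H : Hilbert} {m} (f : H -> ER) (g : Rm m -> ER) (As : Rm m -> H)
  (p : Rm m) : ER :=
  ER_add (conj_H f (As p)) (conj_Rm g (rm_opp p)).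

Definition theta_rho {H : Hilbert} {m} (rho : R) (f : H -> ER) (g : Rm m -> ER)
  (As : Rm m -> H) (p : Rm m) : ER :=
  ER_add (conj_rho_H rho f (As p)) (conj_Rm g (rm_opp p)).

Definition theta_rho_kappa {H : Hilbert} {m} (rho kappa : R) (f : H -> ER)
  (g : Rm m -> ER) (As : Rm m -> H) (p : Rm m) : ER :=
  ER_add (theta_rho rho f g As p) (Fin (kappa / 2 * (rm_norm p)^2)).

Definition is_minimizer {X : Type} (h : X -> ER) (x : X) : Prop :=
  forall y, ER_le (h x) (h y).

(* The regularized dual is
     theta_{rho,kappa}(p) = sup_{x,y} <p, Ax - y> + kappa/2 |p|^2
                                    - f(x) - rho/2 |x|^2 - g(y),
   a supremum of quadratic functions of p with curvature kappa.  Hence it is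
   sequentially lower semicontinuous and satisfies the midpoint inequality of
   a kappa-strongly convex function; on a Hilbert space this gives a unique
   minimizer (a minimizing sequence is Cauchy, and its limit is a minimizer).
   Finiteness somewhere needs affine minorants of f and g, obtained from the
   projection of a point below the epigraph onto the (closed convex)
   epigraph in the product space H x R.  The norm bound follows from the
   sandwich theta_rho <= theta <= theta_rho + rho D_f, compared at a
   minimizer pDS of theta_{rho,kappa} and a minimizer p* of theta. *)

From Stdlib Require Import Reals Lra Lia ClassicalEpsilon FunctionalExtensionality.
From Stdlib Require Vectors.Fin.
Open Scope R_scope.

Section HilbertAlgebra.
Variable X : Hilbert.

Lemma hinner_add_r (x y z : X) : hinner x (hadd y z) = hinner x y + hinner x z.
Proof. rewrite !(hinner_sym X x). apply hinner_add_l. Qed.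

Lemma hinner_scal_r a (x y : X) : hinner x (hscal a y) = a * hinner x y.
Proof. rewrite !(hinner_sym X x). apply hinner_scal_l. Qed.

Lemma hadd_0l (x : X) : hadd hzero x = x.
Proof. rewrite hadd_comm. apply hadd_0. Qed.

Lemma hscal_0 (x : X) : hscal 0 x = hzero.
Proof.
  assert (E : hadd (hscal 0 x) (hscal 0 x) = hscal 0 x).
  { rewrite <- hscal_distr_r. f_equal. ring. }
  apply (f_equal (fun z => hadd z (hopp (hscal 0 x)))) in E.
  rewrite <- hadd_assoc, !hadd_opp, hadd_0 in E. exact E.
Qed.

Lemma hopp_unique (x y : X) : hadd x y = hzero -> y = hopp x.
Proof.
  intro E.
  rewrite <- (hadd_0 X y), <- (hadd_opp X x), hadd_assoc, (hadd_comm X y x), E, hadd_0l.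
  reflexivity.
Qed.

Lemma hopp_scal (x : X) : hopp x = hscal (-1) x.
Proof.
  symmetry. apply hopp_unique.
  rewrite <- (hscal_1 X x) at 1. rewrite <- hscal_distr_r.
  replace (1 + -1) with 0 by ring. apply hscal_0.
Qed.

Lemma hinner_opp_l (x y : X) : hinner (hopp x) y = - hinner x y.
Proof. rewrite hopp_scal, hinner_scal_l. ring. Qed.

Lemma hinner_opp_r (x y : X) : hinner x (hopp y) = - hinner x y.
Proof. rewrite hopp_scal, hinner_scal_r. ring. Qed.

Lemma hsub_zero_eq (x y : X) : hadd x (hopp y) = hzero -> x = y.
Proof.
  intro E. apply (f_equal (fun z => hadd z y)) in E.
  rewrite <- hadd_assoc, (hadd_comm X (hopp y) y), hadd_opp, hadd_0, hadd_0l in E. exact E.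
Qed.

Lemma hnorm_sq (x : X) : hnorm x ^ 2 = hinner x x.
Proof. unfold hnorm. apply pow2_sqrt. apply hinner_pos. Qed.

Lemma hsqdist_sym (x y : X) :
  hinner (hadd x (hopp y)) (hadd x (hopp y)) = hinner (hadd y (hopp x)) (hadd y (hopp x)).
Proof.
  rewrite !hinner_add_l, !hinner_add_r, !hinner_opp_l, !hinner_opp_r, (hinner_sym X y x).
  ring.
Qed.

End HilbertAlgebra.

Ltac hexp := repeat rewrite ?hinner_add_l, ?hinner_add_r, ?hinner_scal_l, ?hinner_scal_r,
   ?hinner_opp_l, ?hinner_opp_r.
Ltac hexp_in H := repeat rewrite ?hinner_add_l, ?hinner_add_r, ?hinner_scal_l,
   ?hinner_scal_r, ?hinner_opp_l, ?hinner_opp_r in H.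

Lemma inner_young (X : Hilbert) (w d : X) eta : eta > 0 ->
  hinner w d <= (eta * hinner w w + hinner d d / eta) / 2.
Proof.
  intros He. pose proof (hinner_pos X (hadd (hscal eta w) (hopp d))) as P.
  hexp_in P. rewrite (hinner_sym X d w) in P.
  apply Rmult_le_reg_l with (2 * eta). lra.
  replace (2 * eta * ((eta * hinner w w + hinner d d / eta) / 2))
    with (eta * eta * hinner w w + hinner d d) by (field; lra).
  nra.
Qed.

Lemma le_of_le_plus_eps (a c K : R) : 0 <= K -> (forall d, d > 0 -> a <= c + d * K) -> a <= c.
Proof.
  intros HK H. destruct (Rle_dec a c) as [h|h]; auto. exfalso.
  assert (Hd : (a - c) / (2 * (K + 1)) > 0) by (apply Rdiv_lt_0_compat; lra).
  specialize (H _ Hd).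
  assert ((a - c) / (2 * (K + 1)) * K < a - c).
  { apply Rmult_lt_reg_r with (2 * (K + 1)). lra.
    unfold Rdiv. field_simplify; try lra. nra. }
  lra.
Qed.

Lemma nonneg_of_quadratic_perturbation (A B : R) :
  0 <= B -> (forall t, 0 < t <= 1 -> 0 <= 2 * t * A + t * t * B) -> 0 <= A.
Proof.
  intros HB H. destruct (Rle_dec 0 A) as [h|h]; auto. exfalso.
  set (t := - A / (B - A)).
  assert (Ht : 0 < t <= 1).
  { unfold t; split. apply Rdiv_lt_0_compat; lra.
    apply Rmult_le_reg_r with (B - A). lra. unfold Rdiv. rewrite Rmult_assoc, Rinv_l; lra. }
  specialize (H t Ht).
  assert (E : 2 * A + t * B = A * (B - 2 * A) / (B - A)) by (unfold t; field; lra).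
  assert (A * (B - 2 * A) / (B - A) < 0).
  { unfold Rdiv. apply Rmult_neg_pos. nra. apply Rinv_0_lt_compat. lra. }
  assert (t * (2 * A + t * B) < 0) by (rewrite E; nra).
  nra.
Qed.

Lemma sqrt_lt_of_lt_sq a e : 0 <= a -> e > 0 -> a < e * e -> sqrt a < e.
Proof. intros. rewrite <- (sqrt_square e) by lra. apply sqrt_lt_1_alt. lra. Qed.

Lemma inv_succ_le (n N : nat) : (0 < N)%nat -> (n >= N)%nat -> / (INR n + 1) <= / INR N.
Proof.
  intros h1 h2. apply Rinv_le_contravar. apply lt_0_INR; auto.
  apply le_INR in h2. lra.
Qed.

Lemma Un_cv_shift (u : nat -> R) l N : Un_cv u l -> Un_cv (fun n => u (n + N)%nat) l.
Proof.
  intros H e He. destruct (H e He) as [M HM]. exists M. intros n Hn. apply HM. lia.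
Qed.

Lemma Un_cv_squeeze0 (a b : nat -> R) : Un_cv b 0 -> (forall n, 0 <= a n <= b n) -> Un_cv a 0.
Proof.
  intros Hb Hab e He. destruct (Hb e He) as [N HN]. exists N. intros n Hn.
  specialize (HN n Hn). specialize (Hab n). unfold Rdist in *. rewrite Rminus_0_r in *.
  rewrite Rabs_right in HN by lra. rewrite Rabs_right by lra. lra.
Qed.

Lemma hdist_cv_sq (X : Hilbert) (u : nat -> X) z : Un_cv (fun n => hdist (u n) z) 0 ->
  forall d, d > 0 -> exists N, forall n, (n >= N)%nat ->
    hinner (hadd (u n) (hopp z)) (hadd (u n) (hopp z)) < d * d.
Proof.
  intros Hc d Hd. destruct (Hc d Hd) as [N HN]. exists N. intros n Hn.
  specialize (HN n Hn). unfold Rdist, hdist, hnorm in HN.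
  rewrite Rminus_0_r, Rabs_right in HN by (apply Rle_ge, sqrt_pos).
  pose proof (hinner_pos X (hadd (u n) (hopp z))).
  rewrite <- (sqrt_sqrt (hinner _ _)) by auto.
  pose proof (sqrt_pos (hinner (hadd (u n) (hopp z)) (hadd (u n) (hopp z)))). nra.
Qed.

Lemma quadratic_lsc (X : Hilbert) (zeta : X) (al be c : R) (u : nat -> X) (z : X) :
  0 <= al -> Un_cv (fun n => hdist (u n) z) 0 ->
  (forall n, al * hinner (u n) (u n) + hinner zeta (u n) + be <= c) ->
  al * hinner z z + hinner zeta z + be <= c.
Proof.
  intros Hal Hc Hu. set (w := hadd (hscal (2 * al) z) zeta).
  apply le_of_le_plus_eps with (K := hinner w w + 1). pose proof (hinner_pos X w); lra.
  intros d Hd. destruct (hdist_cv_sq X u z Hc d Hd) as [N HN].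
  specialize (HN N (le_n N)). specialize (Hu N).
  assert (E : al * hinner z z + hinner zeta z - (al * hinner (u N) (u N) + hinner zeta (u N))
              = hinner w (hadd z (hopp (u N)))
                - al * hinner (hadd (u N) (hopp z)) (hadd (u N) (hopp z))).
  { unfold w. hexp. rewrite !(hinner_sym X (u N) z). ring. }
  pose proof (inner_young X w (hadd z (hopp (u N))) d Hd) as I.
  rewrite <- hsqdist_sym in I.
  pose proof (hinner_pos X (hadd (u N) (hopp z))).
  set (e := hinner (hadd (u N) (hopp z)) (hadd (u N) (hopp z))) in *.
  assert (e / d <= d).
  { apply Rmult_le_reg_r with d. lra. unfold Rdiv. rewrite Rmult_assoc, Rinv_l; lra. }
  assert (0 <= al * e) by nra.
  assert (0 <= d * hinner w w) by (pose proof (hinner_pos X w); nra).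
  lra.
Qed.

Lemma ER_sup_fin (S : R -> Prop) : (exists x, S x) -> bound S ->
  exists s, ER_sup S = Fin s /\ is_lub S s.
Proof.
  intros Hne Hb. unfold ER_sup.
  destruct (excluded_middle_informative (exists x, S x)) as [h1|h1]; [|tauto].
  destruct (excluded_middle_informative (bound S)) as [h2|h2]; [|tauto].
  destruct (completeness S h2 h1) as [s Hs]. exists s; auto.
Qed.

Lemma ER_sup_inf (S : R -> Prop) : (exists x, S x) -> ~ bound S -> ER_sup S = PInf.
Proof.
  intros Hne Hb. unfold ER_sup.
  destruct (excluded_middle_informative (exists x, S x)) as [h1|h1]; [|tauto].
  destruct (excluded_middle_informative (bound S)) as [h2|h2]; tauto.
Qed.

Lemma ER_sup_not_MInf (S : R -> Prop) : (exists x, S x) -> ER_sup S <> MInf.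
Proof.
  intros Hne. destruct (excluded_middle_informative (bound S)) as [h|h].
  - destruct (ER_sup_fin S Hne h) as [s [E _]]. rewrite E; discriminate.
  - rewrite ER_sup_inf; auto; discriminate.
Qed.

Lemma ER_add_sup_le (S T : R -> Prop) c : (exists x, S x) -> (exists x, T x) ->
  (ER_le (ER_add (ER_sup S) (ER_sup T)) (Fin c) <-> forall s t, S s -> T t -> s + t <= c).
Proof.
  intros HS HT.
  destruct (excluded_middle_informative (bound S)) as [hS|hS].
  2:{ rewrite ER_sup_inf; auto. simpl. split; [tauto|]. intros Hc. exfalso. apply hS.
      destruct HT as [b Hb]. exists (c - b). intros a Ha. specialize (Hc a b Ha Hb). lra. }
  destruct (ER_sup_fin S HS hS) as [s [E [H1 H2]]]. rewrite E.
  destruct (excluded_middle_informative (bound T)) as [hT|hT].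
  2:{ rewrite ER_sup_inf; auto. simpl. split; [tauto|]. intros Hc. exfalso. apply hT.
      destruct HS as [a Ha]. exists (c - a). intros b Hb. specialize (Hc a b Ha Hb). lra. }
  destruct (ER_sup_fin T HT hT) as [t [E' [H1' H2']]]. rewrite E'. simpl. split.
  - intros Hc a b Ha Hb. specialize (H1 a Ha). specialize (H1' b Hb). lra.
  - intros Hc.
    assert (Ht : t <= c - s).
    { apply H2'. intros b Hb.
      assert (s <= c - b) by (apply H2; intros a Ha; specialize (Hc a b Ha Hb); lra).
      lra. }
    lra.
Qed.

Lemma ER_add_sup_not_MInf (S T : R -> Prop) : (exists x, S x) -> (exists x, T x) ->
  ER_add (ER_sup S) (ER_sup T) <> MInf.
Proof.
  intros HS HT. pose proof (ER_sup_not_MInf S HS). pose proof (ER_sup_not_MInf T HT).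
  destruct (ER_sup S); destruct (ER_sup T); simpl; congruence.
Qed.

Lemma ER_add_fin_le (Y : ER) K c : Y <> MInf ->
  (ER_le (ER_add Y (Fin K)) (Fin c) <-> ER_le Y (Fin (c - K))).
Proof. intros h. destruct Y; simpl; try tauto; try congruence. split; intros; lra. Qed.

Lemma ER_le_trans a b c : ER_le a b -> ER_le b c -> ER_le a c.
Proof. destruct a, b, c; simpl; intros; auto; try lra; tauto. Qed.

Lemma ER_le_fin (Y : ER) c : Y <> MInf -> ER_le Y (Fin c) -> exists v, Y = Fin v /\ v <= c.
Proof. destruct Y; simpl; intros; try tauto; try congruence. exists x; auto. Qed.

Lemma ER_infimum {Y : Type} (T : Y -> ER) :
  (exists x v, T x = Fin v) -> (exists L, forall x v, T x = Fin v -> L <= v) ->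
  exists th, (forall x v, T x = Fin v -> th <= v) /\
             (forall e, e > 0 -> exists x v, T x = Fin v /\ v < th + e).
Proof.
  intros [x0 [v0 Hx0]] [L HL].
  set (V := fun v => exists x, T x = Fin (- v)).
  assert (Vb : bound V) by (exists (- L); intros v [x Hx]; specialize (HL _ _ Hx); lra).
  assert (Vne : exists v, V v) by (exists (- v0), x0; rewrite Ropp_involutive; auto).
  destruct (completeness V Vb Vne) as [s [Hs1 Hs2]].
  exists (- s). split.
  - intros x v Hx. assert (V (- v)) by (exists x; rewrite Ropp_involutive; auto).
    specialize (Hs1 _ H). lra.
  - intros e He. apply NNPP. intro Hn.
    assert (is_upper_bound V (s - e)).
    { intros w [x Hx]. apply Rnot_lt_le. intro Hw. apply Hn. exists x, (- w). split; [exact Hx | lra]. }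
    specialize (Hs2 _ H). lra.
Qed.

(** * Minimizing midpoint strongly convex functions *)

Section StronglyConvexMinimization.
Variable X : Hilbert.

Definition hmid (x y : X) : X := hadd (hscal (/2) x) (hscal (/2) y).

(* The midpoint inequality of a function that is strongly convex with modulus 8c. *)
Definition midpoint_strongly_convex (c : R) (T : X -> ER) : Prop :=
  forall x y u w, T x = Fin u -> T y = Fin w ->
    ER_le (T (hmid x y)) (Fin ((u + w) / 2 - c * hinner (hadd x (hopp y)) (hadd x (hopp y)))).

Variables (T : X -> ER) (c : R).
Hypotheses (Hc : c > 0) (HT : midpoint_strongly_convex c T) (HM : forall x, T x <> MInf).

Lemma minimizing_sequence_cauchy (th : R) (xs : nat -> X) :
  (forall x v, T x = Fin v -> th <= v) ->
  (forall n, exists v, T (xs n) = Fin v /\ v < th + / (INR n + 1)) ->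
  forall eps, eps > 0 -> exists N, forall n k, (n >= N)%nat -> (k >= N)%nat ->
    sqrt (hinner (hadd (xs n) (hopp (xs k))) (hadd (xs n) (hopp (xs k)))) < eps.
Proof.
  intros Hlow Hxs.
  assert (Hest : forall n k, c * hinner (hadd (xs n) (hopp (xs k))) (hadd (xs n) (hopp (xs k)))
      <= (/ (INR n + 1) + / (INR k + 1)) / 2).
  { intros n k. destruct (Hxs n) as [vn [En Ln]]. destruct (Hxs k) as [vk [Ek Lk]].
    destruct (ER_le_fin _ _ (HM _) (HT _ _ _ _ En Ek)) as [w [Ew Lw]].
    specialize (Hlow _ _ Ew). lra. }
  intros eps He. assert (Hce : 0 < c * (eps * eps)) by (apply Rmult_lt_0_compat; nra).
  destruct (archimed_cor1 _ Hce) as [N [HN1 HN2]]. exists N. intros n k Hn Hk.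
  pose proof (inv_succ_le n N HN2 Hn). pose proof (inv_succ_le k N HN2 Hk).
  specialize (Hest n k).
  apply sqrt_lt_of_lt_sq; [apply hinner_pos | lra |].
  apply Rmult_lt_reg_l with c; auto. lra.
Qed.

Hypothesis Hlsc : lsc hdist T.

Lemma minimizing_sequence_limit (th : R) (xs : nat -> X) (z : X) :
  (forall x v, T x = Fin v -> th <= v) ->
  (forall n, exists v, T (xs n) = Fin v /\ v < th + / (INR n + 1)) ->
  Un_cv (fun n => hdist (xs n) z) 0 -> is_minimizer T z.
Proof.
  intros Hlow Hxs Hz.
  assert (Hzle : forall e, e > 0 -> ER_le (T z) (Fin (th + e))).
  { intros e He. destruct (archimed_cor1 _ He) as [N [HN1 HN2]].
    apply (Hlsc (th + e) z (fun n => xs (n + N)%nat)).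
    - intro n. destruct (Hxs (n + N)%nat) as [v [Ev Lv]]. rewrite Ev. simpl.
      pose proof (inv_succ_le (n + N) N HN2 ltac:(lia)). lra.
    - exact (Un_cv_shift (fun n => hdist (xs n) z) 0 N Hz). }
  destruct (ER_le_fin _ _ (HM z) (Hzle 1 Rlt_0_1)) as [vz [Ez _]].
  assert (Hvz : vz <= th).
  { apply le_of_le_plus_eps with (K := 1). lra. intros d Hd. specialize (Hzle d Hd).
    rewrite Ez in Hzle. simpl in Hzle. lra. }
  intro y. rewrite Ez. destruct (T y) eqn:Ey; simpl; auto.
  - specialize (Hlow _ _ Ey). lra.
  - exact (HM y Ey).
Qed.

Lemma strongly_convex_minimizer_exists :
  (exists x v, T x = Fin v) -> (exists L, forall x v, T x = Fin v -> L <= v) ->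
  exists z, is_minimizer T z.
Proof.
  intros Hfin Hbdd.
  destruct (ER_infimum T Hfin Hbdd) as [th [Hlow Happ]].
  assert (Hseq : forall n : nat, exists x, exists v, T x = Fin v /\ v < th + / (INR n + 1)).
  { intro n. apply Happ. apply Rinv_0_lt_compat. pose proof (pos_INR n). lra. }
  destruct (choice _ Hseq) as [xs Hxs].
  destruct (hcomplete X xs (minimizing_sequence_cauchy th xs Hlow Hxs)) as [z Hz].
  exists z. exact (minimizing_sequence_limit th xs z Hlow Hxs Hz).
Qed.

(* Two minimizers with finite value coincide: their midpoint would be lower. *)
Lemma strongly_convex_minimizer_unique (x y : X) (u : R) :
  is_minimizer T x -> is_minimizer T y -> T x = Fin u -> x = y.
Proof.
  intros Hx Hy Eu.
  assert (Hyu : ER_le (T y) (Fin u)) by (rewrite <- Eu; apply Hy).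
  destruct (ER_le_fin _ _ (HM y) Hyu) as [v [Ev _]].
  pose proof (Hx y) as h1. pose proof (Hy x) as h2. rewrite Eu, Ev in h1, h2. simpl in h1, h2.
  pose proof (ER_le_trans _ _ _ (Hx _) (HT _ _ _ _ Eu Ev)) as h3. rewrite Eu in h3. simpl in h3.
  apply hsub_zero_eq, hinner_def, Rle_antisym; [|apply hinner_pos].
  apply Rmult_le_reg_l with c; lra.
Qed.

End StronglyConvexMinimization.

(** * Projection onto a closed convex set *)

Section Projection.
Variable X : Hilbert.

Definition convex_set (C : X -> Prop) : Prop :=
  forall p q t, C p -> C q -> 0 <= t <= 1 -> C (hadd (hscal t p) (hscal (1 - t) q)).

Definition closed_set (C : X -> Prop) : Prop :=
  forall u z, (forall n, C (u n)) -> Un_cv (fun n => hdist (u n) z) 0 -> C z.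

Variables (C : X -> Prop) (z0 : X).

Definition restricted_sqdist (p : X) : ER :=
  match excluded_middle_informative (C p) with
  | left _ => Fin (hinner (hadd p (hopp z0)) (hadd p (hopp z0)))
  | right _ => PInf
  end.

Lemma restricted_sqdist_in p : C p ->
  restricted_sqdist p = Fin (hinner (hadd p (hopp z0)) (hadd p (hopp z0))).
Proof. intro h. unfold restricted_sqdist. destruct (excluded_middle_informative (C p)); tauto. Qed.

Lemma restricted_sqdist_fin p v : restricted_sqdist p = Fin v ->
  C p /\ v = hinner (hadd p (hopp z0)) (hadd p (hopp z0)).
Proof.
  unfold restricted_sqdist.
  destruct (excluded_middle_informative (C p)); intro E; inversion E; auto.
Qed.

Hypotheses (HCconv : convex_set C) (HCclosed : closed_set C).

(* Parallelogram law: the squared distance is midpoint strongly convex. *)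
Lemma restricted_sqdist_midpoint : midpoint_strongly_convex X (/ 4) restricted_sqdist.
Proof.
  intros p q u w Hu Hw.
  apply restricted_sqdist_fin in Hu as [Hp ->]. apply restricted_sqdist_fin in Hw as [Hq ->].
  assert (Hm : C (hmid X p q)).
  { unfold hmid. replace (hscal (/2) q) with (hscal (1 - /2) q) by (f_equal; field).
    apply HCconv; auto. lra. }
  rewrite (restricted_sqdist_in _ Hm). simpl. unfold hmid. hexp.
  rewrite (hinner_sym X q p), (hinner_sym X z0 p), (hinner_sym X z0 q). lra.
Qed.

Lemma restricted_sqdist_lsc : lsc hdist restricted_sqdist.
Proof.
  intros c p u Hu Hcv.
  assert (Hu' : forall n, C (u n) /\ hinner (hadd (u n) (hopp z0)) (hadd (u n) (hopp z0)) <= c).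
  { intro n. specialize (Hu n). unfold restricted_sqdist in Hu.
    destruct (excluded_middle_informative (C (u n))); simpl in Hu; tauto. }
  assert (Hp : C p) by (apply (HCclosed u p); auto; intro n; apply Hu').
  rewrite (restricted_sqdist_in _ Hp). simpl.
  assert (Hform : forall q, hinner (hadd q (hopp z0)) (hadd q (hopp z0)) =
                    1 * hinner q q + hinner (hscal (-2) z0) q + hinner z0 z0).
  { intro q. hexp. rewrite (hinner_sym X z0 q). ring. }
  rewrite Hform. apply quadratic_lsc with (u := u); auto. lra.
  intro n. rewrite <- Hform. apply Hu'.
Qed.

Lemma projection_exists : (exists p, C p) ->
  exists zb, C zb /\ forall z, C z ->
    hinner (hadd zb (hopp z0)) (hadd zb (hopp z0)) <= hinner (hadd z (hopp z0)) (hadd z (hopp z0)).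
Proof.
  intros [p0 Hp0].
  destruct (strongly_convex_minimizer_exists X restricted_sqdist (/ 4)) as [zb Hzb].
  - lra.
  - exact restricted_sqdist_midpoint.
  - intro p. unfold restricted_sqdist. destruct (excluded_middle_informative (C p)); discriminate.
  - exact restricted_sqdist_lsc.
  - exists p0. eexists. apply restricted_sqdist_in, Hp0.
  - exists 0. intros p v Hv. apply restricted_sqdist_fin in Hv as [_ ->]. apply hinner_pos.
  - assert (Hzb_in : C zb).
    { pose proof (Hzb p0) as h. rewrite (restricted_sqdist_in _ Hp0) in h.
      unfold restricted_sqdist in h.
      destruct (excluded_middle_informative (C zb)); simpl in h; tauto. }
    exists zb. split; auto. intros z Hz. pose proof (Hzb z) as h.
    rewrite (restricted_sqdist_in _ Hz), (restricted_sqdist_in _ Hzb_in) in h. exact h.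
Qed.

Lemma projection_variational (zb : X) : C zb ->
  (forall z, C z -> hinner (hadd zb (hopp z0)) (hadd zb (hopp z0))
                    <= hinner (hadd z (hopp z0)) (hadd z (hopp z0))) ->
  forall z, C z -> 0 <= hinner (hadd zb (hopp z0)) (hadd z (hopp zb)).
Proof.
  intros Hzb Hmin z Hz.
  apply nonneg_of_quadratic_perturbation with (B := hinner (hadd z (hopp zb)) (hadd z (hopp zb))).
  { apply hinner_pos. }
  intros t Ht.
  pose proof (Hmin _ (HCconv z zb t Hz Hzb ltac:(lra))) as h.
  assert (E : hinner (hadd (hadd (hscal t z) (hscal (1 - t) zb)) (hopp z0))
                     (hadd (hadd (hscal t z) (hscal (1 - t) zb)) (hopp z0))
              - hinner (hadd zb (hopp z0)) (hadd zb (hopp z0)) =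
              2 * t * hinner (hadd zb (hopp z0)) (hadd z (hopp zb))
              + t * t * hinner (hadd z (hopp zb)) (hadd z (hopp zb))).
  { hexp. rewrite (hinner_sym X zb z), (hinner_sym X z0 z), (hinner_sym X z0 zb). ring. }
  lra.
Qed.

End Projection.

(** * The product Hilbert space X x R *)

Section ProductSpace.
Variable X : Hilbert.

Lemma pair_eq {A B : Type} (a a' : A) (b b' : B) : a = a' -> b = b' -> (a, b) = (a', b').
Proof. intros; subst; auto. Qed.

Definition prod_sqdist (p q : X * R) : R :=
  hinner (hadd (fst p) (hopp (fst q))) (hadd (fst p) (hopp (fst q)))
  + (snd p + - snd q) * (snd p + - snd q).

Lemma prod_complete (u : nat -> X * R) :
  (forall eps, eps > 0 -> exists N, forall n k, (n >= N)%nat -> (k >= N)%nat ->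
     sqrt (prod_sqdist (u n) (u k)) < eps) ->
  exists l, Un_cv (fun n => sqrt (prod_sqdist (u n) l)) 0.
Proof.
  intros Hu. unfold prod_sqdist in *.
  set (ux := fun n => fst (u n)). set (us := fun n => snd (u n)).
  assert (Hx : forall eps, eps > 0 -> exists N, forall n k, (n >= N)%nat -> (k >= N)%nat ->
      sqrt (hinner (hadd (ux n) (hopp (ux k))) (hadd (ux n) (hopp (ux k)))) < eps).
  { intros eps He. destruct (Hu eps He) as [N HN]. exists N. intros n k Hn Hk.
    eapply Rle_lt_trans; [|exact (HN n k Hn Hk)]. apply sqrt_le_1_alt.
    pose proof (Rle_0_sqr (snd (u n) + - snd (u k))). unfold Rsqr in *. unfold ux. lra. }
  destruct (hcomplete X ux Hx) as [lx Hlx].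
  assert (Hs : Cauchy_crit us).
  { intros eps He. destruct (Hu eps He) as [N HN]. exists N. intros n k Hn Hk.
    unfold Rdist. eapply Rle_lt_trans; [|exact (HN n k Hn Hk)].
    rewrite <- sqrt_Rsqr_abs. apply sqrt_le_1_alt. unfold us, Rsqr.
    pose proof (hinner_pos X (hadd (fst (u n)) (hopp (fst (u k))))). nra. }
  destruct (R_complete us Hs) as [ls Hls].
  exists (lx, ls). intros eps He.
  assert (He2 : eps / 2 > 0) by lra.
  destruct (hdist_cv_sq X ux lx Hlx (eps / 2) He2) as [N1 HN1].
  destruct (Hls (eps / 2) He2) as [N2 HN2].
  exists (N1 + N2)%nat. intros n Hn. unfold Rdist. rewrite Rminus_0_r.
  rewrite Rabs_right by (apply Rle_ge, sqrt_pos).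
  specialize (HN1 n ltac:(lia)). specialize (HN2 n ltac:(lia)). unfold Rdist in HN2.
  apply Rabs_def2 in HN2. unfold ux, us in *. simpl.
  pose proof (hinner_pos X (hadd (fst (u n)) (hopp lx))).
  set (t := snd (u n) + - ls).
  assert (-(eps/2) < t < eps/2) by (unfold t; lra).
  apply sqrt_lt_of_lt_sq; nra.
Qed.

Definition PH : Hilbert.
Proof.
  refine {| car := (X * R)%type;
            hzero := (hzero, 0);
            hadd := fun p q => (hadd (fst p) (fst q), snd p + snd q);
            hopp := fun p => (hopp (fst p), - snd p);
            hscal := fun a p => (hscal a (fst p), a * snd p);
            hinner := fun p q => hinner (fst p) (fst q) + snd p * snd q |}.
  - intros [] [] []; simpl; apply pair_eq; [apply hadd_assoc | ring].
  - intros [] []; simpl; apply pair_eq; [apply hadd_comm | ring].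
  - intros []; simpl; apply pair_eq; [apply hadd_0 | ring].
  - intros []; simpl; apply pair_eq; [apply hadd_opp | ring].
  - intros a b []; simpl; apply pair_eq; [apply hscal_assoc | ring].
  - intros []; simpl; apply pair_eq; [apply hscal_1 | ring].
  - intros a [] []; simpl; apply pair_eq; [apply hscal_distr_l | ring].
  - intros a b []; simpl; apply pair_eq; [apply hscal_distr_r | ring].
  - intros [] []; simpl. rewrite hinner_sym. ring.
  - intros [] [] []; simpl. rewrite hinner_add_l. ring.
  - intros a [] []; simpl. rewrite hinner_scal_l. ring.
  - intros []; simpl. pose proof (hinner_pos X c). nra.
  - intros [x s]; simpl. intro E. pose proof (hinner_pos X x).
    assert (s * s = 0) by nra. assert (hinner x x = 0) by nra.
    apply pair_eq. apply hinner_def; auto. destruct (Rmult_integral _ _ H0); auto.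
  - intros u Hu. exact (prod_complete u Hu).
Defined.

Lemma PH_fst_le (p q : PH) : hdist (fst p) (fst q) <= hdist p q.
Proof.
  unfold hdist, hnorm. apply sqrt_le_1_alt. destruct p, q. simpl.
  pose proof (Rle_0_sqr (r + - r0)). unfold Rsqr in *. lra.
Qed.

Lemma PH_snd_le (p q : PH) : Rabs (snd p - snd q) <= hdist p q.
Proof.
  unfold hdist, hnorm. rewrite <- sqrt_Rsqr_abs. apply sqrt_le_1_alt. destruct p, q. simpl.
  unfold Rsqr. pose proof (hinner_pos X (hadd c (hopp c0))). nra.
Qed.

End ProductSpace.

(** * Affine minorants of proper convex lower semicontinuous functions *)

Section AffineMinorant.
Variables (X : Hilbert) (f : X -> ER).
Hypotheses (Hf_proper : proper f) (Hf_convex : convex_H f) (Hf_lsc : lsc hdist f).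

Definition epigraph (p : PH X) : Prop := exists a, f (fst p) = Fin a /\ a <= snd p.

Lemma epigraph_convex : convex_set (PH X) epigraph.
Proof.
  intros [x s] [y r] t [a [Ea La]] [b [Eb Lb]] Ht. simpl in *.
  pose proof (Hf_convex _ _ _ _ _ Ea Eb Ht) as H.
  destruct (f (hadd (hscal t x) (hscal (1 - t) y))) eqn:E; simpl in H; try tauto.
  - exists x0. simpl. split; auto.
    assert (t * a <= t * s) by (apply Rmult_le_compat_l; lra).
    assert ((1 - t) * b <= (1 - t) * r) by (apply Rmult_le_compat_l; lra). lra.
  - exfalso. exact (proj1 Hf_proper _ E).
Qed.

Lemma epigraph_closed : closed_set (PH X) epigraph.
Proof.
  intros u z Hu Hc.
  assert (Hz : forall e, e > 0 -> ER_le (f (fst z)) (Fin (snd z + e))).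
  { intros e He. destruct (Hc e He) as [N HN].
    apply (Hf_lsc (snd z + e) (fst z) (fun n => fst (u (n + N)%nat))).
    - intro n. destruct (Hu (n + N)%nat) as [a [Ea La]]. rewrite Ea. simpl.
      specialize (HN (n + N)%nat ltac:(lia)). unfold Rdist in HN.
      rewrite Rminus_0_r, Rabs_right in HN by (apply Rle_ge; unfold hdist, hnorm; apply sqrt_pos).
      pose proof (PH_snd_le X (u (n + N)%nat) z).
      assert (Hab : Rabs (snd (u (n + N)%nat) - snd z) < e) by lra.
      apply Rabs_def2 in Hab. lra.
    - apply Un_cv_squeeze0 with (b := fun n => hdist (u (n + N)%nat) z).
      + exact (Un_cv_shift (fun n => hdist (u n) z) 0 N Hc).
      + intro n. split. unfold hdist, hnorm. apply sqrt_pos. apply PH_fst_le. }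
  destruct (ER_le_fin _ _ (proj1 Hf_proper (fst z)) (Hz 1 Rlt_0_1)) as [a [Ea _]].
  exists a. split; auto. apply le_of_le_plus_eps with (K := 1). lra. intros d Hd.
  specialize (Hz d Hd). rewrite Ea in Hz. simpl in Hz. lra.
Qed.

(* Projecting (x0, f x0 - 1) onto the epigraph gives a point strictly above it:
   otherwise the projection would be (x0, f x0 - 1) itself, outside the epigraph. *)
Lemma projection_above (x0 xb : X) (a0 ab sb : R) :
  f x0 = Fin a0 -> f xb = Fin ab -> ab <= sb ->
  (forall x a s, f x = Fin a -> a <= s ->
     0 <= hinner (hadd xb (hopp x0)) (hadd x (hopp xb)) + (sb + - (a0 - 1)) * (s + - sb)) ->
  sb - (a0 - 1) > 0.
Proof.
  intros Ea0 Eab Lab Hvar.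
  pose proof (Hvar xb ab (sb + 1) Eab ltac:(lra)) as h1.
  rewrite hadd_opp, (hinner_sym X), <- (hscal_0 X hzero), hinner_scal_l in h1.
  destruct (Rle_lt_or_eq_dec (a0 - 1) sb) as [h|h]; [nra|lra|].
  exfalso. pose proof (Hvar x0 a0 a0 Ea0 ltac:(lra)) as h2.
  rewrite <- h in h2. replace (a0 - 1 + - (a0 - 1)) with 0 in h2 by ring.
  assert (Hn : hinner (hadd xb (hopp x0)) (hadd xb (hopp x0)) = 0).
  { apply Rle_antisym; [|apply hinner_pos].
    assert (hinner (hadd xb (hopp x0)) (hadd x0 (hopp xb)) =
            - hinner (hadd xb (hopp x0)) (hadd xb (hopp x0))).
    { hexp. rewrite (hinner_sym X x0 xb). ring. }
    lra. }
  apply hinner_def, hsub_zero_eq in Hn. subst xb. rewrite Ea0 in Eab. inversion Eab. lra.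
Qed.

Lemma affine_minorant :
  exists (al : X) (be : R), forall x a, f x = Fin a -> hinner al x + be <= a.
Proof.
  destruct Hf_proper as [_ [x0 [a0 Ea0]]].
  set (z0 := (x0, a0 - 1) : PH X).
  destruct (projection_exists (PH X) epigraph z0 epigraph_convex epigraph_closed)
    as [[xb sb] [Hzb Hmin]].
  { exists ((x0, a0) : PH X), a0. simpl. split; auto; lra. }
  pose proof (projection_variational (PH X) epigraph z0 epigraph_convex _ Hzb Hmin) as Hvar.
  assert (Hvar' : forall x a s, f x = Fin a -> a <= s ->
     0 <= hinner (hadd xb (hopp x0)) (hadd x (hopp xb)) + (sb + - (a0 - 1)) * (s + - sb)).
  { intros x a s Ea Ls. exact (Hvar ((x, s) : PH X) ltac:(exists a; simpl; auto)). }
  destruct Hzb as [ab [Eab Lab]]. simpl in Eab, Lab.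
  pose proof (projection_above x0 xb a0 ab sb Ea0 Eab Lab Hvar') as Hpos.
  set (c0 := sb - (a0 - 1)) in *.
  exists (hscal (- / c0) (hadd xb (hopp x0))), (sb + / c0 * hinner (hadd xb (hopp x0)) xb).
  intros x a Ea. pose proof (Hvar' x a a Ea (Rle_refl a)) as h.
  rewrite hinner_add_r, hinner_opp_r in h. rewrite hinner_scal_l.
  set (P := hinner (hadd xb (hopp x0)) x) in *. set (Q := hinner (hadd xb (hopp x0)) xb) in *.
  apply Rmult_le_reg_l with c0; auto.
  replace (c0 * (- / c0 * P + (sb + / c0 * Q))) with (- P + c0 * sb + Q) by (field; lra).
  assert ((sb + - (a0 - 1)) * (a + - sb) = c0 * a - c0 * sb) by (unfold c0; ring).
  lra.
Qed.

End AffineMinorant.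

(** * R^m as a Hilbert space *)

Lemma fsum_ext m (u v : Fin.t m -> R) : (forall i, u i = v i) -> fsum m u = fsum m v.
Proof. induction m; simpl; intros H; auto. rewrite H. f_equal. apply IHm. intro; apply H. Qed.

Lemma fsum_add m (u v : Fin.t m -> R) : fsum m (fun i => u i + v i) = fsum m u + fsum m v.
Proof. induction m; simpl. ring. rewrite (IHm (fun i => u (Fin.FS i))). ring. Qed.

Lemma fsum_scal m a (u : Fin.t m -> R) : fsum m (fun i => a * u i) = a * fsum m u.
Proof. induction m; simpl. ring. rewrite (IHm (fun i => u (Fin.FS i))). ring. Qed.

Lemma fsum_nonneg m (u : Fin.t m -> R) : (forall i, 0 <= u i) -> 0 <= fsum m u.
Proof.
  induction m; simpl; intros H. lra. pose proof (H Fin.F1).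
  pose proof (IHm (fun i => u (Fin.FS i)) (fun i => H _)). lra.
Qed.

Lemma fsum_ge_term m (u : Fin.t m -> R) i : (forall j, 0 <= u j) -> u i <= fsum m u.
Proof.
  induction m. inversion i. intros H. simpl.
  pattern i; apply Fin.caseS'.
  - pose proof (fsum_nonneg m (fun j => u (Fin.FS j)) (fun j => H _)). lra.
  - intro p. pose proof (IHm (fun j => u (Fin.FS j)) p (fun j => H _)).
    pose proof (H Fin.F1). simpl in *. lra.
Qed.

Lemma fsum_cv m (e : nat -> Fin.t m -> R) : (forall i, Un_cv (fun n => e n i) 0) ->
  Un_cv (fun n => fsum m (e n)) 0.
Proof.
  induction m; simpl; intros H.
  - intros eps He. exists O. intros. unfold Rdist. rewrite Rminus_0_r, Rabs_R0. lra.
  - replace 0 with (0 + 0) by ring. apply CV_plus. apply H.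
    apply (IHm (fun n i => e n (Fin.FS i))). intro i. apply H.
Qed.

Lemma rm_complete m (u : nat -> Rm m) :
  (forall eps, eps > 0 -> exists N, forall n k, (n >= N)%nat -> (k >= N)%nat ->
     rm_dist (u n) (u k) < eps) ->
  exists l, Un_cv (fun n => rm_dist (u n) l) 0.
Proof.
  intros Hu. unfold rm_dist, rm_norm, rm_inner, rm_add, rm_opp in *.
  assert (Hc : forall i, Cauchy_crit (fun n => u n i)).
  { intros i eps He. destruct (Hu eps He) as [N HN]. exists N. intros n k Hn Hk.
    unfold Rdist. eapply Rle_lt_trans; [|exact (HN n k Hn Hk)].
    rewrite <- sqrt_Rsqr_abs. apply sqrt_le_1_alt. unfold Rsqr.
    apply (fsum_ge_term m (fun j => (u n j + - u k j) * (u n j + - u k j)) i).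
    intro j. apply Rle_0_sqr. }
  set (l := fun i => proj1_sig (R_complete _ (Hc i))).
  assert (Hl : forall i, Un_cv (fun n => u n i) (l i)).
  { intro i. unfold l. destruct (R_complete _ (Hc i)). auto. }
  assert (Hs : Un_cv (fun n => fsum m (fun i => (u n i + - l i) * (u n i + - l i))) 0).
  { apply (fsum_cv m (fun n i => (u n i + - l i) * (u n i + - l i))).
    intro i. replace 0 with ((l i + - l i) * (l i + - l i)) by ring.
    apply CV_mult; apply CV_plus; auto; intros e He; exists O; intros;
      unfold Rdist; rewrite Rminus_diag, Rabs_R0; lra. }
  exists l. intros eps He. assert (Hee : eps * eps > 0) by nra.
  destruct (Hs _ Hee) as [N HN]. exists N. intros n Hn. specialize (HN n Hn).
  unfold Rdist in *. rewrite Rminus_0_r in *.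
  pose proof (fsum_nonneg m (fun j => (u n j + - l j) * (u n j + - l j)) (fun j => Rle_0_sqr _)).
  rewrite Rabs_right by (apply Rle_ge, sqrt_pos). rewrite Rabs_right in HN by lra.
  apply sqrt_lt_of_lt_sq; lra.
Qed.

Definition RmH (m : nat) : Hilbert.
Proof.
  refine {| car := Rm m; hzero := fun _ => 0; hadd := @rm_add m; hopp := @rm_opp m;
            hscal := @rm_scal m; hinner := @rm_inner m |};
    try (intros; apply functional_extensionality; intro;
         unfold rm_add, rm_opp, rm_scal; ring).
  - intros; unfold rm_inner; apply fsum_ext; intro; ring.
  - intros; unfold rm_inner, rm_add. rewrite <- fsum_add. apply fsum_ext; intro; ring.
  - intros; unfold rm_inner, rm_scal. rewrite <- fsum_scal. apply fsum_ext; intro; ring.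
  - intros; unfold rm_inner. apply fsum_nonneg. intro; apply Rle_0_sqr.
  - intros x Hx. apply functional_extensionality; intro i. unfold rm_inner in Hx.
    pose proof (fsum_ge_term m (fun i => x i * x i) i (fun j => Rle_0_sqr (x j))) as h.
    pose proof (Rle_0_sqr (x i)). unfold Rsqr in *. simpl in h.
    assert (x i * x i = 0) by lra. destruct (Rmult_integral _ _ H0); auto.
  - exact (rm_complete m).
Defined.

Lemma rm_inner_sym m (p q : Rm m) : rm_inner p q = rm_inner q p.
Proof. exact (hinner_sym (RmH m) p q). Qed.

Lemma rm_inner_opp_l m (p y : Rm m) : rm_inner (rm_opp p) y = - rm_inner p y.
Proof. exact (hinner_opp_l (RmH m) p y). Qed.

Lemma rm_norm_sq m (p : Rm m) : rm_norm p ^ 2 = rm_inner p p.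
Proof. exact (hnorm_sq (RmH m) p). Qed.

Lemma strongly_convex_convex m (mu : R) (g : Rm m -> ER) :
  mu > 0 -> strongly_convex_Rm mu g -> convex_H (H := RmH m) g.
Proof.
  intros Hmu Hg x y a b t Ea Eb Ht. pose proof (Hg x y a b t Ea Eb Ht) as h.
  change (ER_le (g (rm_add (rm_scal t x) (rm_scal (1 - t) y))) (Fin (t * a + (1 - t) * b))).
  destruct (g (rm_add (rm_scal t x) (rm_scal (1 - t) y))); simpl in *; auto.
  assert (0 <= mu / 2 * t * (1 - t) * rm_norm (rm_add x (rm_opp y)) ^ 2).
  { pose proof (pow2_ge_0 (rm_norm (rm_add x (rm_opp y)))).
    apply Rmult_le_pos; auto. apply Rmult_le_pos; [apply Rmult_le_pos|]; lra. }
  lra.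
Qed.

(** * The dual functions *)

Lemma quadratic_midpoint (X : Hilbert) (p q z : X) k :
  hinner (hmid X p q) z + k / 2 * hinner (hmid X p q) (hmid X p q) =
  / 2 * (hinner p z + k / 2 * hinner p p) + / 2 * (hinner q z + k / 2 * hinner q q)
   - k / 8 * hinner (hadd p (hopp q)) (hadd p (hopp q)).
Proof. unfold hmid. hexp. rewrite (hinner_sym X q p). field. Qed.

Lemma rm_inner_sub_r m (p z y : Rm m) :
  rm_inner p (rm_add z (rm_opp y)) = rm_inner p z - rm_inner p y.
Proof.
  pose proof (hinner_add_r (RmH m) p z (rm_opp y)). pose proof (hinner_opp_r (RmH m) p y).
  simpl in *. lra.
Qed.

Lemma Df_ge {H : Hilbert} (f : H -> ER) x : bounded_dom f -> in_dom f x ->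
  / 2 * hnorm x ^ 2 <= Df f.
Proof.
  intros [M HM] Hx. unfold Df.
  set (S := fun v => exists x, in_dom f x /\ v = / 2 * (hnorm x)^2).
  assert (Hb : bound S).
  { exists (/ 2 * M ^ 2). intros v [y [Hy ->]]. specialize (HM y Hy).
    assert (0 <= hnorm y) by (unfold hnorm; apply sqrt_pos). nra. }
  destruct (ER_sup_fin S ltac:(exists (/2 * hnorm x ^ 2); exists x; auto) Hb)
    as [d [E [H1 _]]].
  rewrite E. apply H1. exists x; auto.
Qed.

Section RegularizedDual.
Variables (H : Hilbert) (m : nat) (f : H -> ER) (g : Rm m -> ER)
  (A : H -> Rm m) (As : Rm m -> H) (rho kappa : R).
Hypotheses (Hf : proper f) (Hg : proper g) (HAs : is_adjoint A As)
  (Hrho : rho > 0) (Hkappa : kappa > 0).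

Local Notation thetaK := (theta_rho_kappa rho kappa f g As).

(* The Lagrangian term whose supremum over the domains of f and g is theta(p). *)
Definition lagrangian (p : Rm m) (x : H) (a : R) (y : Rm m) (b : R) : R :=
  rm_inner p (rm_add (A x) (rm_opp y)) - a - b.

Lemma dom_nonempty_f : exists x a, f x = Fin a.
Proof. destruct Hf as [_ [x [a E]]]. eauto. Qed.

Lemma dom_nonempty_g : exists y b, g y = Fin b.
Proof. destruct Hg as [_ [y [b E]]]. eauto. Qed.

Lemma theta_le p c :
  ER_le (theta f g As p) (Fin c) <->
  forall x a y b, f x = Fin a -> g y = Fin b -> lagrangian p x a y b <= c.
Proof.
  destruct dom_nonempty_f as [x0 [a0 E0]]. destruct dom_nonempty_g as [y0 [b0 F0]].
  unfold theta, conj_H, conj_Rm. rewrite ER_add_sup_le by (eexists; eauto).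
  assert (Hl : forall x a y b, hinner (As p) x - a + (rm_inner (rm_opp p) y - b)
                               = lagrangian p x a y b).
  { intros. unfold lagrangian. rewrite HAs, rm_inner_opp_l, rm_inner_sub_r. ring. }
  split.
  - intros Hc x a y b Ea Eb. rewrite <- Hl. apply Hc; eauto.
  - intros Hc s t [x [a [Ea ->]]] [y [b [Eb ->]]]. rewrite Hl. auto.
Qed.

Lemma thetaK_le p c :
  ER_le (thetaK p) (Fin c) <->
  forall x a y b, f x = Fin a -> g y = Fin b ->
    lagrangian p x a y b - rho / 2 * hnorm x ^ 2 + kappa / 2 * rm_inner p p <= c.
Proof.
  destruct dom_nonempty_f as [x0 [a0 E0]]. destruct dom_nonempty_g as [y0 [b0 F0]].
  unfold theta_rho_kappa, theta_rho, conj_rho_H, conj_Rm.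
  rewrite ER_add_fin_le by (apply ER_add_sup_not_MInf; eexists; eauto).
  rewrite ER_add_sup_le by (eexists; eauto).
  assert (Hl : forall x a y b,
     hinner (As p) x - a - rho / 2 * hnorm x ^ 2 + (rm_inner (rm_opp p) y - b)
     = lagrangian p x a y b - rho / 2 * hnorm x ^ 2).
  { intros. unfold lagrangian. rewrite HAs, rm_inner_opp_l, rm_inner_sub_r. ring. }
  rewrite rm_norm_sq. split.
  - intros Hc x a y b Ea Eb. specialize (Hc _ _ (ex_intro _ x (ex_intro _ a (conj Ea eq_refl)))
                                          (ex_intro _ y (ex_intro _ b (conj Eb eq_refl)))).
    rewrite Hl in Hc. lra.
  - intros Hc s t [x [a [Ea ->]]] [y [b [Eb ->]]]. rewrite Hl.
    specialize (Hc x a y b Ea Eb). lra.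
Qed.

Lemma thetaK_not_MInf p : thetaK p <> MInf.
Proof.
  destruct dom_nonempty_f as [x0 [a0 E0]]. destruct dom_nonempty_g as [y0 [b0 F0]].
  unfold theta_rho_kappa, theta_rho, conj_rho_H, conj_Rm.
  assert (h : ER_add (ER_sup (fun v => exists x a, f x = Fin a /\
                                v = hinner (As p) x - a - rho / 2 * hnorm x ^ 2))
                     (ER_sup (fun v => exists y a, g y = Fin a /\
                                v = rm_inner (rm_opp p) y - a)) <> MInf)
    by (apply ER_add_sup_not_MInf; eexists; eauto).
  destruct (ER_add _ _); simpl; congruence.
Qed.

(* The sandwich theta_rho <= theta <= theta_rho + rho D_f, stated for theta_{rho,kappa}. *)
Lemma thetaK_le_of_theta_le p c :
  ER_le (theta f g As p) (Fin c) -> ER_le (thetaK p) (Fin (c + kappa / 2 * rm_norm p ^ 2)).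
Proof.
  intros Hc. apply thetaK_le. intros x a y b Ea Eb.
  pose proof (proj1 (theta_le p c) Hc x a y b Ea Eb).
  pose proof (pow2_ge_0 (hnorm x)). rewrite rm_norm_sq. nra.
Qed.

Lemma theta_le_of_thetaK_le p c : bounded_dom f ->
  ER_le (thetaK p) (Fin c) ->
  ER_le (theta f g As p) (Fin (c - kappa / 2 * rm_norm p ^ 2 + rho * Df f)).
Proof.
  intros Hbdd Hc. apply theta_le. intros x a y b Ea Eb.
  pose proof (proj1 (thetaK_le p c) Hc x a y b Ea Eb).
  pose proof (Df_ge f x Hbdd (ex_intro _ a Ea)). rewrite rm_norm_sq. nra.
Qed.

(* As a supremum of quadratics with curvature kappa, theta_{rho,kappa} is
   midpoint strongly convex and lower semicontinuous. *)
Lemma thetaK_midpoint : midpoint_strongly_convex (RmH m) (kappa / 8) thetaK.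
Proof.
  intros p q u v Eu Ev. apply thetaK_le. intros x a y b Ea Eb.
  assert (Hu : ER_le (thetaK p) (Fin u)) by (rewrite Eu; simpl; lra).
  assert (Hv : ER_le (thetaK q) (Fin v)) by (rewrite Ev; simpl; lra).
  pose proof (proj1 (thetaK_le p u) Hu x a y b Ea Eb).
  pose proof (proj1 (thetaK_le q v) Hv x a y b Ea Eb).
  pose proof (quadratic_midpoint (RmH m) p q (rm_add (A x) (rm_opp y)) kappa) as E.
  unfold hmid in *. simpl in E |- *. unfold lagrangian in *.
  rewrite !(rm_inner_sym _ _ (rm_add (A x) (rm_opp y))) in *. lra.
Qed.

Lemma thetaK_lsc : lsc (hdist (H := RmH m)) thetaK.
Proof.
  intros c p u Hu Hcv. apply thetaK_le. intros x a y b Ea Eb.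
  set (z := rm_add (A x) (rm_opp y)).
  pose proof (quadratic_lsc (RmH m) z (kappa / 2) (- a - b - rho / 2 * hnorm x ^ 2) c u p)
    as Hq. simpl in Hq. unfold lagrangian. fold z.
  rewrite (rm_inner_sym _ p z).
  enough (kappa / 2 * rm_inner p p + rm_inner z p + (- a - b - rho / 2 * hnorm x ^ 2) <= c)
    by lra.
  apply Hq; [lra | exact Hcv |].
  intro n. pose proof (proj1 (thetaK_le (u n) c) (Hu n) x a y b Ea Eb) as h.
  unfold lagrangian in h. fold z in h. rewrite (rm_inner_sym _ (u n) z) in h. lra.
Qed.

(* Fixing one point of dom f x dom g bounds theta_{rho,kappa} below by a quadratic. *)
Lemma thetaK_bounded_below : exists L, forall p v, thetaK p = Fin v -> L <= v.
Proof.
  destruct dom_nonempty_f as [x0 [a0 Ea0]]. destruct dom_nonempty_g as [y0 [b0 Eb0]].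
  set (z := rm_add (A x0) (rm_opp y0)).
  exists (- a0 - b0 - rho / 2 * hnorm x0 ^ 2 - rm_inner z z / kappa / 2).
  intros p v Ev.
  assert (Hv : ER_le (thetaK p) (Fin v)) by (rewrite Ev; simpl; lra).
  pose proof (proj1 (thetaK_le p v) Hv x0 a0 y0 b0 Ea0 Eb0) as h.
  unfold lagrangian in h. fold z in h.
  pose proof (inner_young (RmH m) p (rm_opp z) kappa Hkappa) as Hi.
  pose proof (hinner_opp_r (RmH m) p z) as E1.
  pose proof (hinner_opp_l (RmH m) z (rm_opp z)) as E2.
  pose proof (hinner_opp_r (RmH m) z z) as E3.
  simpl in Hi, E1, E2, E3. rewrite E1, E2, E3 in Hi.
  assert (- - rm_inner z z / kappa = rm_inner z z / kappa) by (field; lra).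
  lra.
Qed.

(* With affine minorants of f and g and a bounded dom f, theta_{rho,kappa}
   is finite at p0 = -(slope of the minorant of g). *)
Lemma thetaK_finite_somewhere :
  convex_H f -> lsc hdist f -> bounded_dom f ->
  convex_H (H := RmH m) g -> lsc rm_dist g ->
  exists p0 C, ER_le (thetaK p0) (Fin C).
Proof.
  intros Hf_convex Hf_lsc [M HM] Hg_convex Hg_lsc.
  destruct (affine_minorant H f Hf Hf_convex Hf_lsc) as [alf [bef Hminf]].
  destruct (affine_minorant (RmH m) g Hg Hg_convex Hg_lsc) as [alg [beg Hming]].
  set (p0 := rm_opp alg). set (w := hadd (As p0) (hopp alf)).
  exists p0, ((hinner w w + M ^ 2) / 2 - bef - beg + kappa / 2 * rm_inner p0 p0).
  apply thetaK_le. intros x a y b Ea Eb.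
  specialize (Hminf x a Ea). specialize (Hming y b Eb). simpl in Hming.
  assert (HxM : hinner x x <= M ^ 2).
  { specialize (HM x (ex_intro _ a Ea)). rewrite <- hnorm_sq.
    assert (0 <= hnorm x) by (unfold hnorm; apply sqrt_pos). nra. }
  pose proof (inner_young H w x 1 Rlt_0_1) as Hw.
  assert (Ew : hinner w x = rm_inner p0 (A x) - hinner alf x)
    by (unfold w; rewrite hinner_add_l, hinner_opp_l, HAs; ring).
  assert (Eg : rm_inner p0 y = - rm_inner alg y) by (unfold p0; apply rm_inner_opp_l).
  unfold lagrangian. rewrite rm_inner_sub_r, Eg.
  pose proof (pow2_ge_0 (hnorm x)). rewrite Rdiv_1_r in Hw. nra.
Qed.

Hypothesis Hfinite : exists p0 C, ER_le (thetaK p0) (Fin C).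

Lemma thetaK_minimizer_finite p : is_minimizer thetaK p -> exists u, thetaK p = Fin u.
Proof.
  intros Hp. destruct Hfinite as [p0 [C HC]].
  destruct (ER_le_fin _ _ (thetaK_not_MInf p) (ER_le_trans _ _ _ (Hp p0) HC)) as [u [Eu _]].
  eauto.
Qed.

Lemma thetaK_unique_minimizer :
  exists pDS, is_minimizer thetaK pDS /\ forall q, is_minimizer thetaK q -> q = pDS.
Proof.
  assert (Hk8 : kappa / 8 > 0) by lra.
  destruct (strongly_convex_minimizer_exists (RmH m) thetaK (kappa / 8) Hk8 thetaK_midpoint
              thetaK_not_MInf thetaK_lsc) as [pDS HpDS].
  { destruct Hfinite as [p0 [C HC]].
    destruct (ER_le_fin _ _ (thetaK_not_MInf p0) HC) as [v [Ev _]]. eauto. }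
  { exact thetaK_bounded_below. }
  exists pDS. split; auto. intros q Hq.
  destruct (thetaK_minimizer_finite q Hq) as [u Eu].
  exact (strongly_convex_minimizer_unique (RmH m) thetaK (kappa / 8) Hk8 thetaK_midpoint
           thetaK_not_MInf q pDS u Hq HpDS Eu).
Qed.

(* Comparing theta_{rho,kappa} at its minimizer p with a minimizer ps of theta,
   through the sandwich: kappa/2 |p|^2 <= kappa/2 |ps|^2 + rho D_f. *)
Lemma thetaK_minimizer_norm_bound p ps : bounded_dom f ->
  is_minimizer thetaK p -> is_minimizer (theta f g As) ps ->
  (rm_norm p) ^ 2 <= (rm_norm ps) ^ 2 + 2 * rho / kappa * Df f.
Proof.
  intros Hbdd Hp Hps. destruct (thetaK_minimizer_finite p Hp) as [u Eu].
  assert (Hu : ER_le (thetaK p) (Fin u)) by (rewrite Eu; simpl; lra).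
  pose proof (ER_le_trans _ _ _ (Hps p) (theta_le_of_thetaK_le p u Hbdd Hu)) as Hth.
  pose proof (ER_le_trans _ _ _ (Hp ps) (thetaK_le_of_theta_le ps _ Hth)) as Hcmp.
  rewrite Eu in Hcmp. simpl in Hcmp.
  apply Rmult_le_reg_l with (kappa / 2). lra.
  replace (kappa / 2 * (rm_norm ps ^ 2 + 2 * rho / kappa * Df f))
    with (kappa / 2 * rm_norm ps ^ 2 + rho * Df f) by (field; lra).
  lra.
Qed.

End RegularizedDual.

Lemma le_sqrt2_mul (a b r : R) : 0 <= a -> 0 <= b <= r -> a ^ 2 <= b ^ 2 + r ^ 2 ->
  a <= sqrt 2 * r.
Proof.
  intros Ha Hb Hab.
  assert (b ^ 2 <= r ^ 2) by (apply pow_incr; lra).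
  assert (Es : (sqrt 2 * r) ^ 2 = 2 * r ^ 2) by (rewrite Rpow_mult_distr, pow2_sqrt; lra).
  assert (0 <= sqrt 2 * r) by (pose proof (sqrt_pos 2); nra).
  apply Rsqr_incr_0; auto. unfold Rsqr. nra.
Qed.

Theorem mainTheorem4
  (H : Hilbert) (m : nat) (f : H -> ER) (g : Rm m -> ER) (mu : R)
  (A : H -> Rm m) (As : Rm m -> H)
  (Hf_proper : proper f) (Hf_convex : convex_H f) (Hf_lsc : lsc hdist f)
  (Hf_bdd : bounded_dom f)
  (Hmu : mu > 0)
  (Hg_proper : proper g) (Hg_lsc : lsc rm_dist g) (Hg_sc : strongly_convex_Rm mu g)
  (HA : linear_continuous A) (HAs : is_adjoint A As)
  (Hqual : exists x, in_dom f x /\ in_dom g (A x))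
  (rho kappa : R) (Hrho : rho > 0) (Hkappa : kappa > 0) :
  (exists pDS, is_minimizer (theta_rho_kappa rho kappa f g As) pDS /\
     forall q, is_minimizer (theta_rho_kappa rho kappa f g As) q -> q = pDS)
  /\
  (forall pDS pstar,
     is_minimizer (theta_rho_kappa rho kappa f g As) pDS ->
     is_minimizer (theta f g As) pstar ->
     (rm_norm pDS)^2 <= (rm_norm pstar)^2 + 2 * rho / kappa * Df f)
  /\
  (forall (Rb eps : R) pDS pstar,
     Rb > 0 -> Df f > 0 -> eps > 0 ->
     rho = eps / (3 * Df f) -> kappa = 2 * eps / (3 * Rb^2) ->
     is_minimizer (theta_rho_kappa rho kappa f g As) pDS ->
     is_minimizer (theta f g As) pstar ->
     rm_norm pstar <= Rb ->
     rm_norm pDS <= sqrt 2 * Rb).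
Proof.
  pose proof (strongly_convex_convex m mu g Hmu Hg_sc) as Hg_convex.
  assert (Hfin : exists p0 C, ER_le (theta_rho_kappa rho kappa f g As p0) (Fin C))
    by (eapply thetaK_finite_somewhere; eauto).
  assert (Hbound : forall pDS pstar,
     is_minimizer (theta_rho_kappa rho kappa f g As) pDS ->
     is_minimizer (theta f g As) pstar ->
     (rm_norm pDS)^2 <= (rm_norm pstar)^2 + 2 * rho / kappa * Df f)
    by (intros; eapply thetaK_minimizer_norm_bound; eauto).
  split; [|split; [exact Hbound|]].
  - eapply thetaK_unique_minimizer; eauto.
  - intros Rb eps pDS pstar HRb HD Heps Erho Ekap HpDS Hpstar Hn.
    assert (E : 2 * rho / kappa * Df f = Rb ^ 2).
    { rewrite Erho, Ekap. field. repeat split; try lra; apply pow_nonzero; lra. }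
    pose proof (Hbound pDS pstar HpDS Hpstar) as h. rewrite E in h.
    apply (le_sqrt2_mul _ (rm_norm pstar)); auto.
    + unfold rm_norm. apply sqrt_pos.
    + split; auto. unfold rm_norm. apply sqrt_pos.
Qed.
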